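(* Let $I$ be a compact interval, $n\in\mathbb{N}$ and $A_0,A_1,\dots,A_n$ non-empty compact intervals of $\mathbb{R}$. Let $p:I\to\mathcal{K}(\mathbb{R})$ be the polynomial $p(x)=A_0\oplus A_1x\oplus A_2x^2\oplus\cdots\oplus A_nx^n$. Then $\dim_H\mathcal{G}_*(p)=1$.
   Context: $\mathcal{K}(\mathbb{R})$: non-empty compact subsets of $\mathbb{R}$ with Hausdorff distance $\mathfrak{H}$. For compact $A,B$: $\Lambda_A(b)=\{a\in A:|b-a|=\min_{a'\in A}|b-a'|\}$, $\Lambda(A,B)=\{(a,b)\in A\times B:a\in\Lambda_A(b)\text{ or }b\in\Lambda_B(a)\}$; metric chains $\mathrm{Ch}(A_0,\dots,A_n)=\{(a_0,\dots,a_n):(a_j,a_{j+1})\in\Lambda(A_j,A_{j+1})\ \forall j\}$; and $A_0\oplus A_1x\oplus\cdots\oplus A_nx^n=\{\sum_{j=0}^n x^ja_j:(a_0,\dots,a_n)\in\mathrm{Ch}(A_0,\dots,A_n)\}$ (metric linear combination with coefficients $x^j$). $\mathcal{G}_*(p)=\{(x,p(x)):x\in I\}$ with metric $d((x,Y),(y,Z))=|x-y|+\mathfrak{H}(Y,Z)$; $\dim_H$ is Hausdorff dimension. *)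

From HB Require Import structures.
From mathcomp Require Import all_boot all_order all_algebra.
From mathcomp Require Import all_classical all_reals all_analysis.
Set Implicit Arguments. Unset Strict Implicit. Unset Printing Implicit Defensive.
Import Order.TTheory GRing.Theory Num.Theory.
Import numFieldNormedType.Exports.
Local Open Scope classical_set_scope.
Local Open Scope ring_scope.

Section Defs.
Variable R : realType.

Definition metric_proj (A : set R) (b : R) : set R :=
  [set a | A a /\ forall a', A a' -> `|b - a| <= `|b - a'|].

Definition metric_pairs (A B : set R) : set (R * R) :=
  [set ab | A ab.1 /\ B ab.2 /\ (metric_proj A ab.2 ab.1 \/ metric_proj B ab.1 ab.2)].

(** Metric chains Ch(A_0,...,A_n), a chain represented by a : nat -> R
    (only the entries a 0, ..., a n matter). *)
Definition metric_chain (n : nat) (A : nat -> set R) (a : nat -> R) : Prop :=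
  (forall j, (j <= n)%N -> A j (a j)) /\
  (forall j, (j < n)%N -> metric_pairs (A j) (A j.+1) (a j, a j.+1)).

Definition metric_poly (n : nat) (A : nat -> set R) (x : R) : set R :=
  [set \sum_(j < n.+1) x ^+ j * a j | a in metric_chain n A].

Definition dist_to (B : set R) (a : R) : R := inf [set `|a - b| | b in B].
Definition hausdorff_dist (A B : set R) : R :=
  Num.max (sup [set dist_to B a | a in A]) (sup [set dist_to A b | b in B]).

Definition graph_dist (u v : R * set R) : R :=
  `|u.1 - v.1| + hausdorff_dist u.2 v.2.

Definition setgraph (I : set R) (p : R -> set R) : set (R * set R) :=
  [set (x, p x) | x in I].

Section Hausdorff.
Variables (T : Type) (d : T -> T -> R).

Local Open Scope ereal_scope.

Definition diam (U : set T) : \bar R :=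
  ereal_sup [set (d u v)%:E | u in U & v in U].

(** diam(U)^s, with diam(empty)^s = 0 (only used for sets of finite diameter). *)
Definition diam_pow (s : R) (U : set T) : \bar R :=
  if pselect (U !=set0) then (powR (fine (diam U)) s)%:E else 0.

Definition hausdorff_content (s delta : R) (E : set T) : \bar R :=
  ereal_inf [set \sum_(i <oo) diam_pow s (F i) | F in
    [set F : nat -> set T | E `<=` \bigcup_i F i /\
                            forall i, diam (F i) <= delta%:E]].

Definition hausdorff_measure (s : R) (E : set T) : \bar R :=
  ereal_sup [set hausdorff_content s delta E | delta in [set delta : R | (0 < delta)%R]].

Definition hausdorff_dim (E : set T) : \bar R :=
  ereal_inf [set s%:E | s in [set s : R | (0 <= s)%R /\ hausdorff_measure s E = 0]].
End Hausdorff.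

End Defs.

From HB Require Import structures.
From mathcomp Require Import all_boot all_order all_algebra.
From mathcomp Require Import all_classical all_reals all_analysis.
From mathcomp Require Import ring lra.
Set Implicit Arguments. Unset Strict Implicit. Unset Printing Implicit Defensive.
Import Order.TTheory GRing.Theory Num.Theory.
Local Open Scope classical_set_scope.
Local Open Scope ring_scope.

(* The map x |-> p(x) is Lipschitz for the Hausdorff distance: two points of
   p(x) and p(y) built from the same metric chain differ by at most L |x - y|,
   where L only depends on bounds for I and the A_j.  So the graph is a
   Lipschitz image of I, and covering I by N intervals of length |I|/N shows
   that H^s vanishes for s > 1.  Conversely, the first projection is
   1-Lipschitz and maps the graph onto I, so comparing a cover of the graph
   with the Lebesgue measure of its projection gives H^s >= |I|/2 for s <= 1. *)


Section HausdorffDistance.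
Variable R : realType.
Implicit Types (A B : set R) (r z w : R).

Lemma dist_to_ge0 B z : 0 <= dist_to B z.
Proof.
have [[w Bw]|/nonemptyPn->] := pselect (B !=set0); last first.
  by rewrite /dist_to image_set0 inf0.
by apply: lb_le_inf => [|_ [v _ <-]]; first by exists `|z - w|, w.
Qed.

Lemma dist_to_le B z w : B w -> dist_to B z <= `|z - w|.
Proof. by move=> Bw; apply: ge_inf; [exists 0 => _ [v _ <-] | exists w]. Qed.

Lemma hausdorff_dist_ge0 A B : 0 <= hausdorff_dist A B.
Proof.
rewrite le_max; apply/orP; left.
set S := [set _ | _ in _].
have [[[_ [z Az _]] ubS]|/sup_out->//] := pselect (has_sup S).
by apply: le_trans (dist_to_ge0 B z) (sup_ubound ubS _); exists z.
Qed.

Lemma hausdorff_dist_le A B r : 0 <= r ->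
  (forall z, A z -> exists2 w, B w & `|z - w| <= r) ->
  (forall w, B w -> exists2 z, A z & `|z - w| <= r) ->
  hausdorff_dist A B <= r.
Proof.
have sup_le (X Y : set R) : (forall z, X z -> exists2 w, Y w & `|z - w| <= r) ->
    0 <= r -> sup [set dist_to Y z | z in X] <= r.
  move=> XY r0; have [[z Xz]|/nonemptyPn->] := pselect (X !=set0); last first.
    by rewrite image_set0 sup0.
  apply: ge_sup => [|_ [v Xv <-]]; first by exists (dist_to Y z), z.
  by have [w Yw vw] := XY v Xv; exact: le_trans (dist_to_le v Yw) vw.
move=> r0 AB BA; rewrite ge_max !sup_le// => w /BA[z Az zw].
by exists z; rewrite // distrC.
Qed.

End HausdorffDistance.

Lemma graph_dist_ge_fst (R : realType) (p q : R * set R) :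
  `|p.1 - q.1| <= graph_dist p q.
Proof. by rewrite lerDl hausdorff_dist_ge0. Qed.

Lemma graph_dist_ge0 (R : realType) (p q : R * set R) : 0 <= graph_dist p q.
Proof. exact: le_trans (normr_ge0 _) (graph_dist_ge_fst p q). Qed.

Section PowerSums.
Variable R : realType.

Lemma normr_itv_le (l u x : R) : l <= x <= u -> `|x| <= `|l| + `|u|.
Proof.
move=> /andP[lx xu]; rewrite ler_norml.
have := ler_norm u; have := ler_norm (- l); have := normr_ge0 l; have := normr_ge0 u.
by rewrite normrN => *; apply/andP; split; lra.
Qed.

Lemma normr_subXX_le (B x y : R) (j : nat) : `|x| <= B -> `|y| <= B ->
  `|x ^+ j - y ^+ j| <= j%:R * B ^+ j.-1 * `|x - y|.
Proof.
move=> xB yB; have B0 : 0 <= B := le_trans (normr_ge0 x) xB.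
rewrite subrXX normrM mulrC ler_wpM2r //.
apply: le_trans (ler_norm_sum _ _ _) _.
apply: le_trans (_ : _ <= \sum_(i < j) B ^+ j.-1) _; last first.
  by rewrite sumr_const card_ord mulr_natl.
apply: ler_sum => i _.
have ij : (i <= j.-1)%N by rewrite -ltnS prednK ?ltn_ord // (leq_trans _ (ltn_ord i)).
rewrite normrM !normrX -[in leRHS](subnK ij) exprD.
by apply: ler_pM; rewrite ?exprn_ge0 // lerXn2r // nnegrE.
Qed.

Lemma normr_sum_powers_sub_le (m : nat) (c M : nat -> R) (B x y : R) :
  `|x| <= B -> `|y| <= B -> (forall j, (j < m)%N -> `|c j| <= M j) ->
  `|\sum_(j < m) x ^+ j * c j - \sum_(j < m) y ^+ j * c j|
    <= (\sum_(j < m) M j * j%:R * B ^+ j.-1) * `|x - y|.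
Proof.
move=> xB yB cM; rewrite -sumrB mulr_suml.
apply: le_trans (ler_norm_sum _ _ _) _; apply: ler_sum => j _.
have -> : M j * j%:R * B ^+ j.-1 * `|x - y| = j%:R * B ^+ j.-1 * `|x - y| * M j.
  by ring.
by rewrite -mulrBl normrM; apply: ler_pM; rewrite ?normr_subXX_le ?cM.
Qed.

Lemma hausdorff_dist_metric_poly_le (n : nat) (A : nat -> set R) (M : nat -> R)
    (B x y : R) :
  (forall j, 0 <= M j) -> (forall j z, (j <= n)%N -> A j z -> `|z| <= M j) ->
  `|x| <= B -> `|y| <= B ->
  hausdorff_dist (metric_poly n A x) (metric_poly n A y)
    <= (\sum_(j < n.+1) M j * j%:R * B ^+ j.-1) * `|x - y|.
Proof.
move=> M0 AM xB yB; have B0 : 0 <= B := le_trans (normr_ge0 x) xB.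
have chain_le c : metric_chain n A c ->
    `|\sum_(j < n.+1) x ^+ j * c j - \sum_(j < n.+1) y ^+ j * c j|
      <= (\sum_(j < n.+1) M j * j%:R * B ^+ j.-1) * `|x - y|.
  move=> [Ac _]; apply: normr_sum_powers_sub_le => // j jn.
  exact: AM jn (Ac j jn).
apply: hausdorff_dist_le => [|_ [c Ac <-]|_ [c Ac <-]].
- by rewrite mulr_ge0 // sumr_ge0 // => j _; rewrite !mulr_ge0 ?exprn_ge0.
- by eexists; [exists c | exact: chain_le].
- by eexists; [exists c | exact: chain_le].
Qed.

End PowerSums.

Section Grids.
Variable R : realType.

Lemma grid_cover (a b h x : R) (N : nat) : 0 < h -> b - a = N%:R * h ->
  a <= x <= b -> exists2 i, (i <= N)%N & `|x - (a + i%:R * h)| <= h.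
Proof.
move=> h0 baN /andP[ax xb].
have q0 : 0 <= (x - a) / h by rewrite divr_ge0 ?subr_ge0 // ltW.
have lo : (Num.Def.trunc ((x - a) / h))%:R <= (x - a) / h by rewrite truncn_le.
have hi : (x - a) / h < (Num.Def.trunc ((x - a) / h)).+1%:R := truncnS_gt _.
exists (Num.Def.trunc ((x - a) / h)).
  rewrite truncn_le_nat (@le_lt_trans _ _ N%:R) ?ltr_nat //.
  by rewrite ler_pdivrMr // -baN lerD2r.
move: lo hi; rewrite ler_pdivlMr // ltr_pdivrMr // -natr1 => lo hi.
by rewrite ler_norml; apply/andP; split; nra.
Qed.

Lemma nneseries_le_prefix (g : nat -> \bar R) (N : nat) (c : R) :
  (forall i, (0 <= g i)%E) -> (forall i, (i <= N)%N -> (g i <= c%:E)%E) ->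
  (forall i, (N < i)%N -> g i = 0%E) ->
  (\sum_(i <oo) g i <= (N.+1%:R * c)%:E)%E.
Proof.
move=> g0 gc gN; rewrite (nneseries_split 0 N.+1) // eseries0 ?adde0; last first.
  by move=> i Ni _; apply: gN.
rewrite add0n big_mkord.
apply: (@le_trans _ _ (\sum_(i < N.+1) c%:E)%R).
  by apply: lee_sum => i _; apply: gc; rewrite -ltnS.
by rewrite sumEFin sumr_const card_ord mulr_natl.
Qed.

Lemma exists_fine_grid (c δ e s : R) : 0 < c -> 0 < δ -> 0 < e -> 1 < s ->
  exists2 N : nat, (0 < N)%N &
    2 * c / N%:R <= δ /\ N.+1%:R * (2 * c / N%:R) `^ s <= e.
Proof.
move=> c0 δ0 e0 s1.
(* With w := 2 c / N <= X, where X ^ (s - 1) = e / (4 c), we get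
   (N + 1) w ^ s <= 2 (N w) w ^ (s - 1) = 4 c w ^ (s - 1) <= e. *)
set X := (e / (4 * c)) `^ (s - 1)^-1.
set τ := Num.min δ X.
have τ0 : 0 < τ by rewrite lt_min δ0 powR_gt0 // divr_gt0 // mulr_gt0.
set N := (Num.Def.trunc (2 * c / τ)).+1.
have N0 : 0 < N%:R :> R by rewrite ltr0n.
set w := 2 * c / N%:R.
have w0 : 0 < w by rewrite divr_gt0 // mulr_gt0.
have wτ : w <= τ.
  by rewrite /w ler_pdivrMr // [τ * _]mulrC -ler_pdivrMr //; apply/ltW/truncnS_gt.
exists N => //; split; first by apply: le_trans wτ _; rewrite ge_min lexx.
have s0 : 0 < s := lt_trans ltr01 s1.
have wX : w `^ (s - 1) <= e / (4 * c).
  apply: (@le_trans _ _ (X `^ (s - 1))).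
    apply: ge0_ler_powR; rewrite ?nnegrE ?subr_ge0 ?(ltW s1) ?(ltW w0) ?powR_ge0 //.
    by apply: le_trans wτ _; rewrite ge_min lexx orbT.
  rewrite /X -powRrM mulVf ?powRr1 ?subr_eq0 ?gt_eqF //.
  by rewrite divr_ge0 // ?mulr_ge0 // ltW.
have NS : N.+1%:R <= 2 * N%:R :> R.
  by rewrite -natrM ler_nat mul2n -addnn addSn ltnS leq_addl.
have Nw : N%:R * w = 2 * c by rewrite /w mulrCA divff ?mulr1 // gt_eqF.
rewrite -(mulr_powRB1 (ltW w0)) //.
apply: le_trans (ler_wpM2r (mulr_ge0 (ltW w0) (powR_ge0 _ _)) NS) _.
have -> : 2 * N%:R * (w * w `^ (s - 1)) = 2 * (N%:R * w) * w `^ (s - 1) by ring.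
rewrite Nw; apply: le_trans (ler_wpM2l _ wX) _; first by rewrite !mulr_ge0 // ltW.
have -> : 2 * (2 * c) * (e / (4 * c)) = e by field; rewrite gt_eqF.
by [].
Qed.

End Grids.

Section HausdorffMeasure.
Variables (R : realType) (T : Type) (d : T -> T -> R).
Hypothesis d_ge0 : forall p q, 0 <= d p q.
Implicit Types (U E : set T) (s w : R).

Lemma diam_ge U p q : U p -> U q -> ((d p q)%:E <= diam d U)%E.
Proof. by move=> Up Uq; apply: ereal_sup_ubound; exists p => //; exists q. Qed.

Lemma diam_le U w : (forall p q, U p -> U q -> d p q <= w) -> (diam d U <= w%:E)%E.
Proof. by move=> Uw; apply: ge_ereal_sup => _ [p Up [q Uq <-]]; rewrite lee_fin Uw. Qed.

Lemma diam_fin U p w : U p -> (diam d U <= w%:E)%E ->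
  exists2 D, diam d U = D%:E & 0 <= D <= w.
Proof.
move=> Up Uw; have dpp : (0%:E <= (d p p)%:E)%E by rewrite lee_fin.
have := le_trans dpp (diam_ge Up Up).
by move: (diam d U) Uw => [D| |] //=; rewrite !lee_fin => Dw D0; exists D; rewrite ?D0.
Qed.

Lemma diam_pow_ge0 s U : (0 <= diam_pow d s U)%E.
Proof. by rewrite /diam_pow; case: pselect => ? //; rewrite lee_fin powR_ge0. Qed.

Lemma diam_pow_set0 s : diam_pow d s set0 = 0%E.
Proof. by rewrite /diam_pow; case: pselect => // -[? []]. Qed.

Lemma diam_pow_le s U w : 0 <= s -> (forall p q, U p -> U q -> d p q <= w) ->
  (diam_pow d s U <= (w `^ s)%:E)%E.
Proof.
move=> s0 Uw; rewrite /diam_pow; case: pselect => [[p Up]|?]; last first.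
  by rewrite lee_fin powR_ge0.
have [D -> /andP[D0 Dw]] := diam_fin Up (diam_le Uw).
by rewrite lee_fin ge0_ler_powR // nnegrE (le_trans D0).
Qed.

Lemma hausdorff_content_ge0 s (δ : R) E : (0 <= hausdorff_content d s δ E)%E.
Proof.
apply: le_ereal_inf_tmp => _ [F _ <-].
by apply: nneseries_ge0 => i _ _; apply: diam_pow_ge0.
Qed.

Lemma hausdorff_content_le_measure s (δ : R) E : 0 < δ ->
  (hausdorff_content d s δ E <= hausdorff_measure d s E)%E.
Proof. by move=> δ0; apply: ereal_sup_ubound; exists δ. Qed.

Lemma hausdorff_measure_eq0 s E :
  (forall δ, 0 < δ -> hausdorff_content d s δ E = 0%E) ->
  hausdorff_measure d s E = 0%E.
Proof.
move=> H0; apply/eqP; rewrite eq_le -(H0 1 ltr01) hausdorff_content_le_measure //.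
by rewrite andbT; apply: ge_ereal_sup => _ [δ δ0 <-]; rewrite !H0.
Qed.

Lemma hausdorff_dim_eq E t : 0 <= t ->
  (forall s, t < s -> hausdorff_measure d s E = 0%E) ->
  (forall s, 0 <= s < t -> hausdorff_measure d s E != 0%E) ->
  hausdorff_dim d E = t%:E.
Proof.
move=> t0 above below; apply/eqP; rewrite eq_le; apply/andP; split.
  apply/lee_addgt0Pr => e e0; apply: ereal_inf_lbound; exists (t + e); last first.
    by rewrite EFinD.
  by split; [exact: addr_ge0 (ltW e0) | apply: above; rewrite ltrDl].
rewrite /hausdorff_dim; apply: le_ereal_inf_tmp => _ [s [s0 Hs] <-].
rewrite lee_fin leNgt.
by apply/negP => st; have := below s; rewrite s0 st Hs eqxx => /(_ isT).
Qed.

Lemma exists_proj_cover (π : T -> R) U s : (forall p q, `|π p - π q| <= d p q) ->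
  0 <= s <= 1 -> (diam d U <= 1%:E)%E ->
  exists G : set R, [/\ measurable G, π @` U `<=` G &
                      (lebesgue_measure G <= 2%:E * diam_pow d s U)%E].
Proof.
move=> πd /andP[s0 s1] U1; have [[p Up]|/nonemptyPn->] := pselect (U !=set0); last first.
  by exists set0; rewrite image_set0 measure0 diam_pow_set0 mule0; split.
have [D UD /andP[D0 D1]] := diam_fin Up U1.
exists `[π p - D, π p + D]%classic; split => //.
  move=> _ [q Uq <-]; have := diam_ge Uq Up; rewrite UD lee_fin => dqp.
  have := le_trans (πd q p) dqp; rewrite /= in_itv /= ler_norml => /andP[? ?].
  by apply/andP; split; lra.
rewrite lebesgue_measure_itv /diam_pow /=; case: pselect => [?|[]]; last by exists p.
case: ifP => _; last by rewrite UD lee_fin mulr_ge0 ?powR_ge0.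
rewrite UD -EFinD -EFinM lee_fin /= (_ : _ + D - _ = 2 * D); last by ring.
rewrite ler_wpM2l //; have [->|D_neq0] := eqVneq D 0; first exact: powR_ge0.
by apply: ger1_powR => //; rewrite lt0r D_neq0 D0.
Qed.

Lemma hausdorff_content_ge_proj (π : T -> R) E (a b s : R) : a < b ->
  0 <= s <= 1 -> (forall p q, `|π p - π q| <= d p q) -> `[a, b] `<=` π @` E ->
  (((b - a) / 2)%:E <= hausdorff_content d s 1 E)%E.
Proof.
move=> ab s01 πd abE; apply: le_ereal_inf_tmp => _ [F [EF F1] <-].
have /choice[G HG] := fun i => exists_proj_cover πd s01 (F1 i).
have abG : `[a, b] `<=` \bigcup_i G i.
  move=> _ /abE[p Ep <-]; have [i _ Fip] := EF p Ep.
  by exists i => //; case: (HG i) => _ + _; apply; exists p.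
have mG i : measurable (G i) by case: (HG i).
have ab_len : lebesgue_measure (`[a, b]%classic : set R) = (b - a)%:E.
  by rewrite lebesgue_measure_itv /= lte_fin ab -EFinD.
have : ((b - a)%:E <= 2%:E * \sum_(i <oo) diam_pow d s (F i))%E.
  rewrite -ab_len -nneseriesZl => [|i _]; last exact: diam_pow_ge0.
  apply: le_trans (@measure_sigma_subadditive _ _ _ lebesgue_measure _ G mG
    (measurable_itv _) abG) _.
  by apply: lee_nneseries => i _; case: (HG i).
by rewrite mulrC EFinM lee_pdivrMl.
Qed.

Lemma hausdorff_content_lipschitz_image_le (f : R -> T) (a b K δ s : R) (N : nat) :
  a < b -> 0 <= K -> 0 <= s -> (0 < N)%N ->
  (forall x y, a <= x <= b -> a <= y <= b -> d (f x) (f y) <= K * `|x - y|) ->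
  2 * (K * (b - a)) / N%:R <= δ ->
  (hausdorff_content d s δ (f @` `[a, b]) <=
    (N.+1%:R * (2 * (K * (b - a)) / N%:R) `^ s)%:E)%E.
Proof.
move=> ab K0 s0 N0 fK wδ.
set w := 2 * (K * (b - a)) / N%:R; set h := (b - a) / N%:R.
have h0 : 0 < h by rewrite divr_gt0 ?subr_gt0 ?ltr0n.
have Kh : K * (2 * h) = w by rewrite /w /h !mulrA [K * 2]mulrC.
pose F i := if (i <= N)%N
  then f @` [set x | a <= x <= b /\ `|x - (a + i%:R * h)| <= h] else set0.
have Fw i p q : F i p -> F i q -> d p q <= w.
  rewrite /F; case: ifP => // _ [x [xab xi] <-] [y [yab yi] <-].
  apply: le_trans (fK x y xab yab) _; rewrite -Kh ler_wpM2l //.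
  by move: xi yi; rewrite !ler_norml => /andP[? ?] /andP[? ?]; apply/andP; split; lra.
apply: (@le_trans _ _ (\sum_(i <oo) diam_pow d s (F i))%E).
  apply: ereal_inf_lbound; exists F => //; split => [_ [x xab <-]|i].
    have bah : b - a = N%:R * h by rewrite /h mulrC divfK // pnatr_eq0 -lt0n.
    move: xab; rewrite /= in_itv /= => xab; have [i iN xi] := grid_cover h0 bah xab.
    by exists i => //; rewrite /F iN; exists x.
  by apply: diam_le => p q Fp Fq; apply: le_trans (Fw _ _ _ Fp Fq) wδ.
apply: nneseries_le_prefix => [i|i iN|i Ni]; first exact: diam_pow_ge0.
  by apply: diam_pow_le => // p q; apply: Fw.
by rewrite /F leqNgt Ni diam_pow_set0.
Qed.

Lemma hausdorff_content_lipschitz_image_eq0 (f : R -> T) (a b K δ s : R) :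
  a < b -> 0 < K -> 0 < δ -> 1 < s ->
  (forall x y, a <= x <= b -> a <= y <= b -> d (f x) (f y) <= K * `|x - y|) ->
  hausdorff_content d s δ (f @` `[a, b]) = 0%E.
Proof.
move=> ab K0 δ0 s1 fK; apply/eqP; rewrite eq_le hausdorff_content_ge0 andbT.
apply/lee_addgt0Pr => e e0; rewrite add0e.
have c0 : 0 < K * (b - a) by rewrite mulr_gt0 // subr_gt0.
have [N N0 [wδ small]] := exists_fine_grid c0 δ0 e0 s1.
have s0 : 0 <= s := le_trans ler01 (ltW s1).
apply: le_trans (hausdorff_content_lipschitz_image_le ab (ltW K0) s0 N0 fK wδ) _.
by rewrite lee_fin.
Qed.

End HausdorffMeasure.

Theorem theorem4p12 (R : realType) (a b : R) (n : nat) (l u : nat -> R) :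
  a < b ->
  (forall j, (j <= n)%N -> l j <= u j) ->
  hausdorff_dim (@graph_dist R)
    (setgraph `[a, b]%classic (metric_poly n (fun j => `[l j, u j]%classic))) = 1%:E.
Proof.
move=> ab _; set P := metric_poly n _.
set L := \sum_(j < n.+1) (`|l j| + `|u j|) * j%:R * (`|a| + `|b|) ^+ j.-1.
have L0 : 0 <= L by rewrite sumr_ge0 // => j _; rewrite !mulr_ge0 ?exprn_ge0.
have graphL x y : a <= x <= b -> a <= y <= b ->
    graph_dist (x, P x) (y, P y) <= (1 + L) * `|x - y|.
  move=> xab yab; rewrite /graph_dist mulrDl mul1r lerD2l.
  apply: (@hausdorff_dist_metric_poly_le _ _ _ (fun j => `|l j| + `|u j|))
    => [j|j z _ /= zlu||].
  - by rewrite addr_ge0.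
  - by apply: normr_itv_le; move: zlu; rewrite in_itv.
  - exact: normr_itv_le.
  - exact: normr_itv_le.
apply: hausdorff_dim_eq => [//|s s1|s /andP[s0 s1]].
  apply: hausdorff_measure_eq0 => δ δ0.
  have K0 : 0 < 1 + L by rewrite ltr_pwDl.
  exact: (hausdorff_content_lipschitz_image_eq0 (@graph_dist_ge0 R) ab K0 δ0 s1 graphL).
rewrite gt_eqF //.
apply: lt_le_trans (hausdorff_content_le_measure _ _ _ ltr01).
apply: lt_le_trans
  (hausdorff_content_ge_proj (@graph_dist_ge0 R) ab _ (@graph_dist_ge_fst R) _).
- by rewrite lte_fin divr_gt0 // subr_gt0.
- by rewrite s0 ltW.
- by move=> x abx; exists (x, P x) => //; exists x.
Qed.
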